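(* Let $M,P$ be positive integers, let $\Gamma$ be the set of positive 1-1 vectors in $\{-1,0,1,\dots,M\}^P$, let $\eta_i(j)>0$ for $i\in\{1,\dots,P\}$, $j\in\{-1,\dots,M\}$ be as in the context, and let $\pi$ be the target distribution $\pi(\gamma)\propto 1_{\Gamma}(\gamma)\prod_{i=1}^P\eta_i(\gamma_i)$. Consider the Gibbs sampler on $\Gamma$ with transition kernel $$\pi(\gamma'|\gamma)=\prod_{n=1}^P\pi_n(\gamma'_n|\gamma'_1,\dots,\gamma'_{n-1},\gamma_{n+1},\dots,\gamma_P),$$ where, writing $\bar n=\{1,\dots,P\}\setminus\{n\}$ and $\gamma_{\bar n}$ for the vector with the $n$-th coordinate removed, the conditionals are given by $$\pi_n(\gamma_n|\gamma_{\bar n})\propto\eta_n(\gamma_n)\prod_{i\in\bar n}\big(1-1_{\{1,\dots,M\}}(\gamma_n)\,\delta_{\gamma_n}[\gamma_i]\big).$$ Then, starting from any initial state in $\Gamma$, the sampler converges to $\pi$ at an exponential rate: letting $\pi^j(\gamma'|\gamma)$ denote the $j$-step transition probabilities and $\beta=\min_{\gamma,\gamma'\in\Gamma}\pi^2(\gamma'|\gamma)$, one has $\beta>0$ and for every $j\ge1$ $$\max_{\gamma,\gamma'\in\Gamma}\big|\pi^j(\gamma'|\gamma)-\pi(\gamma')\big|\le(1-2\beta)^{\lfloor j/2\rfloor}.$$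
   Context: A vector $\gamma\in\{-1,\dots,M\}^P$ is positive 1-1 if there are no distinct $i,i'$ with $\gamma_i=\gamma_{i'}>0$. $1_S$ is the indicator of $S$; $\delta_a[b]=1$ if $a=b$ and $0$ otherwise. In the paper the weights arise as follows: given labels $\ell_1,\dots,\ell_R$ of existing objects and birth labels $\ell_{R+1},\dots,\ell_P$, expected survival probabilities $\bar P_S(\ell_i)\in(0,1)$ ($i\le R$), birth probabilities $r_B(\ell_i)$ ($i>R$), and positive quantities $\bar\psi^{(j)}(\ell_i)$ (predicted likelihood of label $\ell_i$ being misdetected, $j=0$, or generating measurement $j\in\{1,\dots,M\}$), one sets $\eta_i(j)=1-\bar P_S(\ell_i)$ if $i\le R$, $j<0$; $\eta_i(j)=\bar P_S(\ell_i)\bar\psi^{(j)}(\ell_i)$ if $i\le R$, $j\ge0$; $\eta_i(j)=1-r_B(\ell_i)$ if $i>R$, $j<0$; $\eta_i(j)=r_B(\ell_i)\bar\psi^{(j)}(\ell_i)$ if $i>R$, $j\ge0$. These are assumed to satisfy $\eta_i(j)>0$ for all $i,j$. *)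

From HB Require Import structures.
From mathcomp Require Import all_boot all_order all_algebra.
Set Implicit Arguments. Unset Strict Implicit. Unset Printing Implicit Defensive.
Import Order.TTheory GRing.Theory Num.Theory.
Local Open Scope ring_scope.

(* Coordinate values: an element j : 'I_(M.+2) encodes the label
   lab j = j - 1 in {-1, 0, 1, ..., M}. *)
Definition lab (M : nat) (j : 'I_(M.+2)) : int := (nat_of_ord j)%:Z - 1.

Definition state (P M : nat) := {ffun 'I_P -> 'I_(M.+2)}.

Definition pos_one_one (P M : nat) (g : state P M) : bool :=
  [forall i : 'I_P, forall i' : 'I_P,
     (i != i') ==> ~~ ((lab (g i) == lab (g i')) && (0 < lab (g i)))].

(* The weights eta_i(j) of the paper (0-based index i; the paper's i <= R
   is val i < Rn). psi i j is \bar psi^{(j)}(ell_i) for j in {0..M}. *)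
Definition etaw (R : realFieldType) (P Rn : nat) (PS rB : 'I_P -> R)
    (psi : 'I_P -> int -> R) (i : 'I_P) (j : int) : R :=
  if (nat_of_ord i < Rn)%N then
    (if j < 0 then 1 - PS i else PS i * psi i j)
  else (if j < 0 then 1 - rB i else rB i * psi i j).

Section Chain.
Variables (R : realFieldType) (P M : nat) (et : 'I_P -> int -> R).

Definition weight (g : state P M) : R := \prod_(i : 'I_P) et i (lab (g i)).
Definition target (g : state P M) : R :=
  if pos_one_one g then weight g / \sum_(h : state P M | pos_one_one h) weight h
  else 0.

(* Unnormalised full conditional of coordinate n given gamma_{\bar n}
   (coordinate n of g is ignored):
   eta_n(x) prod_{i <> n} (1 - 1_{1..M}(x) delta_x[gamma_i]). *)
Definition cond_w (n : 'I_P) (g : state P M) (x : 'I_(M.+2)) : R :=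
  et n (lab x) *
  \prod_(i : 'I_P | i != n)
     (1 - ((0 < lab x)%R : bool)%:R * ((lab x == lab (g i)) : bool)%:R).

Definition cond (n : 'I_P) (g : state P M) (x : 'I_(M.+2)) : R :=
  cond_w n g x / \sum_(y : 'I_(M.+2)) cond_w n g y.

Definition mixst (n : 'I_P) (g g' : state P M) : state P M :=
  [ffun i => if (nat_of_ord i < nat_of_ord n)%N then g' i else g i].

Definition kernel (g g' : state P M) : R :=
  \prod_(n : 'I_P) cond n (mixst n g g') (g' n).

Fixpoint kpow (j : nat) (g g' : state P M) : R :=
  match j with
  | O => (g == g')%:R
  | S k => \sum_(h : state P M) kpow k g h * kernel h g'
  end.

End Chain.

(** Each coordinate update of the scan redraws one coordinate from its full
    conditional; on every fibre {γ' | γ'_n̄ = γ_n̄} the target is proportional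
    to the unnormalised conditional, so the update is a stochastic kernel
    leaving π invariant, and so is the whole scan.  One sweep moves any state
    to the all-absent state (label -1 never collides), and from there reaches
    every γ ∈ Γ, so the two-step kernel is positive on Γ × Γ.  Minorising the
    two-step kernel by β at the two states "all -1" and "all 0" (Doeblin)
    contracts the oscillation of γ ↦ π^(2m)(γ'|γ) by 1 - 2β per double step;
    π and π^j(·|γ) are both averages of that function. *)

From HB Require Import structures.
From mathcomp Require Import all_boot all_order all_algebra.
From mathcomp Require Import zify ring lra.
Import Order.TTheory GRing.Theory Num.Theory.
Local Open Scope ring_scope.

Section MarkovKernels.
Set Implicit Arguments. Unset Strict Implicit.
Variables (R : realFieldType) (T : finType).
Implicit Types (K L N : T -> T -> R) (mu pi : T -> R) (S : pred T).

Definition distribution mu := (forall x, 0 <= mu x) /\ \sum_x mu x = 1.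
Definition supported S mu := forall x, ~~ S x -> mu x = 0.
Definition stochastic K := forall x, distribution (K x).
Definition stationary pi K := forall y, \sum_x pi x * K x y = pi y.

Definition kid : T -> T -> R := fun x y => (x == y)%:R.
Definition kcomp K L : T -> T -> R := fun x y => \sum_z K x z * L z y.
Fixpoint kpower K j : T -> T -> R :=
  if j is i.+1 then kcomp (kpower K i) K else kid.

Lemma sum_mul_delta (F : T -> R) u : \sum_z F z * (z == u)%:R = F u.
Proof.
rewrite (bigD1 u) //= eqxx mulr1 big1 ?addr0 // => z /negbTE->.
by rewrite mulr0.
Qed.

Lemma kcomp1k K : kcomp kid K =2 K.
Proof.
move=> x y; rewrite /kcomp -(sum_mul_delta (K^~ y) x).
by apply: eq_bigr => z _; rewrite mulrC eq_sym.
Qed.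

Lemma kcompk1 K : kcomp K kid =2 K.
Proof. by move=> x y; apply: sum_mul_delta. Qed.

Lemma kcompA K L N : kcomp (kcomp K L) N =2 kcomp K (kcomp L N).
Proof.
move=> x y; rewrite /kcomp; under eq_bigr do rewrite mulr_suml.
rewrite exchange_big; apply: eq_bigr => z _; rewrite mulr_sumr.
by apply: eq_bigr => w _; rewrite mulrA.
Qed.

Lemma kpowerD K a b : kpower K (a + b) =2 kcomp (kpower K a) (kpower K b).
Proof.
elim: b => [|b IH] x y; first by rewrite addn0 kcompk1.
by rewrite addnS /= -kcompA /kcomp; apply: eq_bigr => z _; rewrite IH.
Qed.

Lemma eq_stochastic K L : K =2 L -> stochastic L -> stochastic K.
Proof.
move=> eKL L_st x; have [L_ge0 L_sum] := L_st x.
by split=> [y|]; rewrite ?eKL // -L_sum; apply: eq_bigr => y _; rewrite eKL.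
Qed.

Lemma eq_stationary pi K L : K =2 L -> stationary pi L -> stationary pi K.
Proof.
by move=> eKL pi_st y; rewrite -pi_st; apply: eq_bigr => x _; rewrite eKL.
Qed.

Lemma stochastic_kid : stochastic kid.
Proof.
move=> x; split=> [y|]; first exact: ler0n.
by rewrite -(sum_mul_delta (fun=> 1) x); apply: eq_bigr => y _; rewrite mul1r eq_sym.
Qed.

Lemma stochastic_kcomp K L : stochastic K -> stochastic L -> stochastic (kcomp K L).
Proof.
move=> K_st L_st x; have [K_ge0 K_sum] := K_st x.
split=> [y|]; first by apply: sumr_ge0 => z _; rewrite mulr_ge0 //; case: (L_st z).
rewrite exchange_big -{}K_sum; apply: eq_bigr => z _.
by rewrite -mulr_sumr; case: (L_st z) => _ ->; rewrite mulr1.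
Qed.

Lemma stochastic_kpower K j : stochastic K -> stochastic (kpower K j).
Proof.
by move=> K_st; elim: j => [|j IH]; [exact: stochastic_kid | exact: stochastic_kcomp].
Qed.

Lemma stationary_kid pi : stationary pi kid.
Proof. by move=> y; apply: sum_mul_delta. Qed.

Lemma stationary_kcomp pi K L :
  stationary pi K -> stationary pi L -> stationary pi (kcomp K L).
Proof.
move=> K_st L_st y; rewrite -L_st; under eq_bigr do rewrite /kcomp mulr_sumr.
rewrite exchange_big; apply: eq_bigr => z _; rewrite -K_st mulr_suml.
by apply: eq_bigr => x _; rewrite mulrA.
Qed.

Lemma stationary_kpower pi K j : stationary pi K -> stationary pi (kpower K j).
Proof.
by move=> K_st; elim: j => [|j IH]; [exact: stationary_kid | exact: stationary_kcomp].
Qed.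

Lemma supported_kpower S K j x :
  (forall z, supported S (K z)) -> S x -> supported S (kpower K j x).
Proof.
move=> K_S Sx y Sy; case: j => [|j] /=.
  have [eq_xy | /negbTE neq_xy] := eqVneq x y; last by rewrite /kid neq_xy.
  by rewrite -eq_xy Sx in Sy.
by apply: big1 => z _; rewrite K_S // mulr0.
Qed.

Lemma sum_weighted_diff_le S (a b f : T -> R) (s c : R) :
  (forall z, 0 <= a z) -> (forall z, 0 <= b z) -> supported S a -> supported S b ->
  \sum_z a z = s -> \sum_z b z = s ->
  (forall z z', S z -> S z' -> f z - f z' <= c) ->
  \sum_z a z * f z - \sum_z b z * f z <= s * c.
Proof.
move=> a_ge0 b_ge0 a_S b_S a_sum b_sum f_osc.
have s_ge0 : 0 <= s by rewrite -a_sum sumr_ge0.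
have [s_gt0 | s_le0] := ltrP 0 s; last first.
  have s0 : s = 0 by apply/le_anti; rewrite s_le0.
  have a0 z : a z = 0.
    by apply: (psumr_eq0P (P := xpredT) (fun z _ => a_ge0 z)); rewrite ?a_sum.
  have b0 z : b z = 0.
    by apply: (psumr_eq0P (P := xpredT) (fun z _ => b_ge0 z)); rewrite ?b_sum.
  by rewrite s0 mul0r !big1 ?subrr // => z _; rewrite ?a0 ?b0 mul0r.
(* Multiplied by s, both sides become double sums weighted by a z * b z'. *)
rewrite -(ler_pM2l s_gt0); apply: le_trans (_ : \sum_z \sum_z' a z * b z' * c <= _).
  have -> : s * (\sum_z a z * f z - \sum_z b z * f z) =
            \sum_z \sum_z' a z * b z' * (f z - f z').
    transitivity ((\sum_z a z * f z) * (\sum_z' b z') -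
                  (\sum_z a z) * (\sum_z' b z' * f z')).
      by rewrite a_sum b_sum mulrBr mulrC.
    rewrite !mulr_suml -sumrB; apply: eq_bigr => z _.
    by rewrite !mulr_sumr -sumrB; apply: eq_bigr => z' _; ring.
  apply: ler_sum => z _; apply: ler_sum => z' _.
  have [Sz | /a_S->] := boolP (S z); last by rewrite !mul0r.
  have [Sz' | /b_S->] := boolP (S z'); last by rewrite mulr0 !mul0r.
  by rewrite ler_wpM2l ?mulr_ge0 ?f_osc.
rewrite -{1}a_sum -b_sum !mulr_suml; apply: ler_sum => z _.
by rewrite mulr_sumr; apply: ler_sum => z' _; rewrite mulrA.
Qed.

Lemma doeblin_bound K S pi (E : {set T}) (beta : R) :
  stochastic K -> (forall x, supported S (K x)) ->
  distribution pi -> supported S pi -> stationary pi K ->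
  {subset E <= S} -> (forall x z, S x -> z \in E -> beta <= kpower K 2 x z) ->
  forall j x y, S x -> `|kpower K j x y - pi y| <= (1 - #|E|%:R * beta) ^+ j./2.
Proof.
move=> K_st K_S [pi_ge0 pi_sum] pi_S pi_st E_S minor j x y Sx.
set rho := 1 - #|E|%:R * beta.
have K2_st := stochastic_kpower 2 K_st.
pose a u z := kpower K 2 u z - (if z \in E then beta else 0).
have a_ge0 u z : S u -> 0 <= a u z.
  move=> Su; rewrite subr_ge0; case: ifP => [/minor->//|_].
  by case: (K2_st u).
have a_S u : S u -> supported S (a u).
  move=> Su z Sz; have /negbTE E'z : z \notin E by apply: contra Sz; apply: E_S.
  by rewrite /a E'z (supported_kpower 2 K_S Su Sz) subrr.
have a_sum u : \sum_z a u z = rho.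
  rewrite sumrB -big_mkcond sumr_const /= /rho mulr_natl.
  by case: (K2_st u) => _ ->.
pose f m u := kpower K m.*2 u y.
have f_osc m u u' : S u -> S u' -> f m u - f m u' <= rho ^+ m.
  elim: m u u' => [|m IH] u u' Su Su'.
    by rewrite /f /= /kid expr0; case: (u == y); case: (u' == y); rewrite /=; lra.
  have f_step v : f m.+1 v = \sum_z a v z * f m z + beta * \sum_(z in E) f m z.
    rewrite {1}/f doubleS -add2n kpowerD /kcomp mulr_sumr [X in _ + X]big_mkcond.
    rewrite -big_split; apply: eq_bigr => z _.
    by rewrite /a /f; case: (z \in E) => /=; ring.
  rewrite !f_step opprD addrACA subrr addr0 exprS.
  exact: sum_weighted_diff_le (a_ge0 u ^~ Su) (a_ge0 u' ^~ Su') (a_S u Su) (a_S u' Su')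
    (a_sum u) (a_sum u') IH.
have [k_ge0 k_sum] := stochastic_kpower (odd j) K_st x.
have k_S := supported_kpower (odd j) K_S Sx.
have -> : kpower K j x y = \sum_z kpower K (odd j) x z * f j./2 z.
  by rewrite -{1}(odd_double_half j) kpowerD.
rewrite -(stationary_kpower j./2.*2 pi_st) ler_norml -[rho ^+ _]mul1r.
apply/andP; split.
  by rewrite lerNl opprB; exact: sum_weighted_diff_le pi_ge0 k_ge0 pi_S k_S pi_sum k_sum (f_osc _).
exact: sum_weighted_diff_le k_ge0 pi_ge0 k_S pi_S k_sum pi_sum (f_osc _).
Qed.

End MarkovKernels.

Arguments kid {R T}.
Arguments stochastic_kid {R T}.

Lemma lab_bounds (M : nat) (x : 'I_M.+2) : -1 <= lab x <= M%:Z.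
Proof. by have := ltn_ord x; rewrite /lab; lia. Qed.

Section GibbsSampler.
Set Implicit Arguments. Unset Strict Implicit.
Variables (R : realFieldType) (P M : nat) (et : 'I_P -> int -> R).
Hypothesis et_gt0 : forall i (x : 'I_M.+2), 0 < et i (lab x).
Implicit Types (g h : state P M) (k n : 'I_P) (x : 'I_M.+2).
Local Notation Gamma := (@pos_one_one P M).

Definition admissible g n x : bool :=
  [forall i, (i != n) ==> ~~ ((0 < lab x) && (lab x == lab (g i)))].

Lemma cond_wE n g x : cond_w et n g x = et n (lab x) * (admissible g n x)%:R.
Proof.
rewrite /cond_w; congr (_ * _).
have [ok | /forallPn[i]] := boolP (admissible g n x).
  apply: big1 => i ni; move: (implyP (forallP ok i) ni).
  by case: (0 < lab x); case: (lab x == _); rewrite /= ?mul0r ?mulr0 ?subr0.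
rewrite negb_imply negbK => /andP[ni /andP[pos_x eq_xi]].
by rewrite (bigD1 i) //= pos_x eq_xi mulr1 subrr mul0r.
Qed.

Lemma admissible_ord0 g n : admissible g n ord0.
Proof. by apply/forallP => i; rewrite implybT. Qed.

Lemma cond_norm_gt0 n g : 0 < \sum_y cond_w et n g y.
Proof.
rewrite (bigD1 ord0) //= cond_wE admissible_ord0 mulr1 ltr_wpDr //.
by apply: sumr_ge0 => y _; rewrite cond_wE mulr_ge0 ?ler0n ?(ltW (et_gt0 _ _)).
Qed.

Lemma cond_distribution n g : distribution (cond et n g).
Proof.
have norm_gt0 := cond_norm_gt0 n g.
split=> [x|]; last by rewrite -mulr_suml divff // lt0r_neq0.
by rewrite /cond divr_ge0 ?(ltW norm_gt0) // cond_wE mulr_ge0 ?ler0n ?(ltW (et_gt0 _ _)).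
Qed.

Lemma cond_gt0 n g x : admissible g n x -> 0 < cond et n g x.
Proof. by move=> adm; rewrite /cond cond_wE adm mulr1 divr_gt0 ?cond_norm_gt0. Qed.

Lemma cond_eq0 n g x : ~~ admissible g n x -> cond et n g x = 0.
Proof. by move=> /negbTE adm; rewrite /cond cond_wE adm !mulr0 mul0r. Qed.

Lemma eq_cond n g h : (forall i, i != n -> g i = h i) -> cond et n g =1 cond et n h.
Proof.
have eq_w : (forall i, i != n -> g i = h i) -> cond_w et n g =1 cond_w et n h.
  by move=> gh x; rewrite /cond_w; congr (_ * _); apply: eq_bigr => i /gh->.
move=> gh x; rewrite /cond (eq_w gh); congr (_ / _).
by apply: eq_bigr => y _; rewrite eq_w.
Qed.

Definition upd g k x : state P M := [ffun i => if i == k then x else g i].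

Definition agree_off k g h : bool := [forall i, (i != k) ==> (g i == h i)].

Lemma agree_offC k g h : agree_off k g h = agree_off k h g.
Proof. by apply: eq_forallb => i; rewrite [g i == _]eq_sym. Qed.

Lemma upd_eqE g h k x : (g == upd h k x) = (g k == x) && agree_off k g h.
Proof.
apply/eqP/andP => [->|[/eqP gk /forallP agree]].
  split; first by rewrite ffunE eqxx.
  by apply/forallP => i; apply/implyP => /negbTE ik; rewrite ffunE ik.
apply/ffunP => i; rewrite ffunE; case: eqP => [->//|/eqP ik].
exact/eqP/(implyP (agree i)).
Qed.

Lemma upd_ne g k x i : i != k -> upd g k x i = g i.
Proof. by move=> /negbTE ik; rewrite ffunE ik. Qed.

Lemma upd_id g k : upd g k (g k) = g.
Proof. by apply/ffunP => i; rewrite ffunE; case: eqP => // ->. Qed.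

Lemma sum_agree_off (F : state P M -> R) k h :
  \sum_g F g * (agree_off k g h)%:R = \sum_x F (upd h k x).
Proof.
under [RHS]eq_bigr do rewrite -(sum_mul_delta F).
rewrite exchange_big; apply: eq_bigr => g _; rewrite -mulr_sumr; congr (_ * _).
under eq_bigr do rewrite upd_eqE -mulnb natrM mulrC eq_sym.
by rewrite sum_mul_delta.
Qed.

Definition one_one_off g k : bool :=
  [forall i, forall i', ((i != k) && (i' != k) && (i != i')) ==>
     ~~ ((lab (g i) == lab (g i')) && (0 < lab (g i)))].

Lemma pos_one_one_upd g k x :
  pos_one_one (upd g k x) = one_one_off g k && admissible g k x.
Proof.
apply/idP/andP => [/forallP poo | [/forallP off /forallP adm]].
  split; apply/forallP => i.
    apply/forallP => i'; apply/implyP => /andP[/andP[ik i'k] ii'].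
    by move: (implyP (forallP (poo i) i') ii'); rewrite !upd_ne.
  apply/implyP => ik; move: (implyP (forallP (poo k) i)).
  by rewrite eq_sym ik !ffunE eqxx (negbTE ik) andbC => /(_ isT).
apply/forallP => i; apply/forallP => i'; apply/implyP => ii'; rewrite !ffunE.
have [ik | ik] := eqVneq i k.
  have i'k : i' != k by rewrite -ik eq_sym.
  by rewrite (negbTE i'k) andbC; exact: (implyP (adm i')).
have [i'k | i'k] := eqVneq i' k.
  by apply: contra (implyP (adm i) ik) => /andP[/eqP <- ->]; rewrite eqxx.
by apply: (implyP (forallP (off i) i')); rewrite ik i'k.
Qed.

Lemma target_upd_proportional g k :
  exists c, forall x, target et (upd g k x) = c * cond_w et k g x.
Proof.
rewrite /target; set Z := \sum_(h | _) _.
exists ((one_one_off g k)%:R * (\prod_(i | i != k) et i (lab (g i))) / Z) => x.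
rewrite pos_one_one_upd cond_wE /weight (bigD1 k) //= ffunE eqxx.
under eq_bigr => i ik do rewrite upd_ne //.
by case: (one_one_off g k); case: (admissible g k x); rewrite /= ?mul0r ?mulr0 //; ring.
Qed.

Definition site k g g' : R := cond et k g (g' k) * (agree_off k g' g)%:R.

Lemma site_stochastic k : stochastic (site k).
Proof.
move=> g; have [cond_ge0 cond_sum] := cond_distribution k g.
split=> [g'|]; first by rewrite mulr_ge0 ?ler0n.
rewrite (sum_agree_off (fun g' => cond et k g (g' k))) -{}cond_sum.
by apply: eq_bigr => x _; rewrite ffunE eqxx.
Qed.

Lemma site_stationary k : stationary (target et) (site k).
Proof.
move=> g'; have [c target_c] := target_upd_proportional g' k.
under eq_bigr do rewrite mulrA agree_offC.
rewrite (sum_agree_off (fun h => target et h * cond et k h (g' k))).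
under eq_bigr => x _ do rewrite target_c (eq_cond (@upd_ne g' k x)).
rewrite -mulr_suml -mulr_sumr -[in RHS](upd_id g' k) target_c /cond.
have := cond_norm_gt0 k g'; set D := \sum_y _ => /lt0r_neq0 D_neq0.
by field.
Qed.

Definition scan (m : nat) g g' : R :=
  (\prod_(n : 'I_P | (n < m)%N) cond et n (mixst n g g') (g' n)) *
  [forall i : 'I_P, (m <= i)%N ==> (g' i == g i)]%:R.

Lemma scan0 : scan 0 =2 kid.
Proof.
move=> g g'; rewrite /scan /kid big_pred0 // mul1r eq_sym.
suff -> : [forall i : 'I_P, (0 <= i)%N ==> (g' i == g i)] = (g' == g) by [].
apply/forallP/eqP => [tail | ->]; last by move=> i; rewrite eqxx implybT.
by apply/ffunP => i; apply/eqP/(implyP (tail i)).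
Qed.

Lemma kernelE : kernel et =2 scan P.
Proof.
move=> g g'; rewrite /scan /kernel.
have /forallP-> : forall i : 'I_P, (P <= i)%N ==> (g' i == g i).
  by move=> i; rewrite leqNgt ltn_ord.
by rewrite mulr1; apply: eq_bigl => n; rewrite ltn_ord.
Qed.

Lemma mixst_mixst n k g g' : (n <= k)%N -> mixst n g (mixst k g g') = mixst n g g'.
Proof.
move=> nm; apply/ffunP => i; rewrite !ffunE.
by case: ltnP => // i_n; rewrite (leq_trans i_n nm).
Qed.

Lemma scanS k : scan k.+1 =2 kcomp (scan k) (site k).
Proof.
move=> g g'; set h0 := mixst k g g'.
rewrite /kcomp (bigD1 h0) //= big1 ?addr0 => [|h /eqP h_neq]; last first.
  rewrite /scan /site.
  have [/forallP h_tail|] := boolP [forall i : 'I_P, (k <= i)%N ==> (h i == g i)];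
    last by rewrite mulr0 mul0r.
  have [/forallP h_agree|] := boolP (agree_off k g' h); last by rewrite !mulr0.
  case: h_neq; apply/ffunP => i; rewrite ffunE.
  case: ltnP => [ik | ki]; last exact/eqP/(implyP (h_tail i)).
  by apply/esym/eqP/(implyP (h_agree i)); rewrite neq_ltn ik.
have h0_tail : [forall i : 'I_P, (k <= i)%N ==> (h0 i == g i)].
  by apply/forallP => i; apply/implyP => ki; rewrite ffunE ltnNge ki.
have agree_h0 : agree_off k g' h0 = [forall i : 'I_P, (k.+1 <= i)%N ==> (g' i == g i)].
  apply: eq_forallb => i; rewrite ffunE.
  case: (ltngtP i k) => [ik | ki | /val_inj->]; rewrite ?eqxx ?implybT //.
  by rewrite -val_eqE gtn_eqF.
rewrite /scan /site h0_tail agree_h0 mulr1 mulrA (bigD1 k) //= [_ * cond _ _ _ _]mulrC.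
congr (_ * _ * _).
symmetry; apply: eq_big => [n | n n_lt_k]; first by rewrite ltnS andbC -ltn_neqAle.
by rewrite mixst_mixst ?(ltnW n_lt_k) // ffunE n_lt_k.
Qed.

Lemma scan_stochastic (m : nat) : (m <= P)%N -> stochastic (scan m).
Proof.
elim: m => [_ | m IH m_lt_P]; first exact: eq_stochastic scan0 stochastic_kid.
apply: (eq_stochastic (scanS (Ordinal m_lt_P))).
exact: stochastic_kcomp (IH (ltnW m_lt_P)) (site_stochastic _).
Qed.

Lemma scan_stationary (m : nat) : (m <= P)%N -> stationary (target et) (scan m).
Proof.
elim: m => [_ | m IH m_lt_P]; first exact: eq_stationary scan0 (stationary_kid _).
apply: (eq_stationary (scanS (Ordinal m_lt_P))).
exact: stationary_kcomp (IH (ltnW m_lt_P)) (site_stationary _).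
Qed.

Lemma kernel_stochastic : stochastic (kernel (M := M) et).
Proof. exact: eq_stochastic kernelE (scan_stochastic (leqnn P)). Qed.

Lemma kernel_stationary : stationary (target et) (kernel (M := M) et).
Proof. exact: eq_stationary kernelE (scan_stationary (leqnn P)). Qed.

Lemma kernel_supported g : supported Gamma (kernel et g).
Proof.
move=> g' /forallPn[i /forallPn[i']].
rewrite negb_imply negbK => /andP[ii' /andP[/eqP lab_eq pos]].
wlog lt_ii' : i i' ii' lab_eq pos / (i < i')%N.
  move=> wlog_lt; case: (ltngtP i i') => [|lt|eq]; first exact: wlog_lt.
    by apply: (wlog_lt i' i); rewrite 1?eq_sym // -lab_eq.
  by move: ii'; rewrite (val_inj eq) eqxx.
rewrite /kernel (bigD1 i') //= cond_eq0 ?mul0r //.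
by apply/forallPn; exists i; rewrite negb_imply ii' negbK ffunE lt_ii' -lab_eq pos eqxx.
Qed.

Definition const_state x : state P M := [ffun=> x].

Lemma const_state_one_one x : lab x <= 0 -> Gamma (const_state x).
Proof.
move=> x_le0; apply/forallP => i; apply/forallP => i'; apply/implyP => _.
by rewrite !ffunE le_gtF ?andbF.
Qed.

Lemma kernel_to_absent g : 0 < kernel et g (const_state ord0).
Proof. by apply: prodr_gt0 => n _; rewrite ffunE cond_gt0 ?admissible_ord0. Qed.

Lemma kernel_from_absent g' : Gamma g' -> 0 < kernel et (const_state ord0) g'.
Proof.
move=> /forallP g'_ok; apply: prodr_gt0 => n _; apply: cond_gt0.
apply/forallP => i; apply/implyP => i_neq_n; rewrite ffunE.
case: ltnP => _; first by rewrite andbC; apply: (implyP (forallP (g'_ok n) i)); rewrite eq_sym.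
by rewrite ffunE; apply/negP => /andP[pos /eqP lab_eq]; rewrite lab_eq in pos.
Qed.

Lemma kpower2_kernel_gt0 g g' : Gamma g' -> 0 < kpower (kernel et) 2 g g'.
Proof.
move=> g'_ok.
have -> : kpower (kernel et) 2 g g' = \sum_h kernel et g h * kernel et h g'.
  by apply: eq_bigr => h _; rewrite kcomp1k.
rewrite (bigD1 (const_state ord0)) //= ltr_wpDr //.
  by apply: sumr_ge0 => h _; rewrite mulr_ge0 //;
    [case: (kernel_stochastic g) | case: (kernel_stochastic h)].
by rewrite mulr_gt0 ?kernel_to_absent ?kernel_from_absent.
Qed.

Lemma weight_gt0 g : 0 < weight et g.
Proof. exact: prodr_gt0. Qed.

Lemma target_distribution : distribution (target (M := M) et).
Proof.
have norm_gt0 : 0 < \sum_(h | Gamma h) weight et h.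
  rewrite (bigD1 (const_state ord0)) ?const_state_one_one //= ltr_wpDr ?weight_gt0 //.
  by apply: sumr_ge0 => h _; rewrite ltW ?weight_gt0.
split=> [g|]; last by rewrite /target -big_mkcond /= -mulr_suml divff ?lt0r_neq0.
by rewrite /target; case: ifP => // _; rewrite divr_ge0 ?ltW ?weight_gt0.
Qed.

Lemma target_supported : supported Gamma (target et).
Proof. by move=> g /negbTE g_out; rewrite /target g_out. Qed.

End GibbsSampler.

Lemma kpowE (R : realFieldType) (P M : nat) (et : 'I_P -> int -> R) (j : nat) :
  kpow et j =2 kpower (kernel (M := M) et) j.
Proof.
elim: j => [//|j IH] g g' /=.
by apply: eq_bigr => h _; rewrite IH.
Qed.

Theorem proposition3 (R : realFieldType) (M P Rn : nat)
  (PS rB : 'I_P -> R) (psi : 'I_P -> int -> R) (beta : R) :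
  (0 < M)%N -> (0 < P)%N -> (Rn <= P)%N ->
  (forall i : 'I_P, (nat_of_ord i < Rn)%N -> 0 < PS i < 1) ->
  (forall i : 'I_P, (Rn <= nat_of_ord i)%N -> 0 <= rB i <= 1) ->
  (forall (i : 'I_P) (j : int), 0 <= j <= M%:Z -> 0 < psi i j) ->
  (forall (i : 'I_P) (j : int), -1 <= j <= M%:Z -> 0 < etaw Rn PS rB psi i j) ->
  (* beta = min over gamma, gamma' in Gamma of pi^2(gamma' | gamma) *)
  (exists g g' : state P M, [/\ pos_one_one g, pos_one_one g' &
      beta = kpow (etaw Rn PS rB psi) 2 g g']) ->
  (forall g g' : state P M, pos_one_one g -> pos_one_one g' ->
      beta <= kpow (etaw Rn PS rB psi) 2 g g') ->
  0 < beta /\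
  forall j : nat, (1 <= j)%N ->
    forall g g' : state P M, pos_one_one g -> pos_one_one g' ->
      `| kpow (etaw Rn PS rB psi) j g g' - target (etaw Rn PS rB psi) g' |
        <= (1 - 2 * beta) ^+ (j./2).
Proof.
move=> _ P_gt0 _ _ _ _ eta_gt0 [g0 [g0' [_ g0'_ok beta_eq]]] beta_min.
set et := etaw Rn PS rB psi.
have et_gt0 i (x : 'I_M.+2) : 0 < et i (lab x) by apply: eta_gt0; apply: lab_bounds.
split=> [|j _ g g' g_ok _]; first by rewrite beta_eq kpowE kpower2_kernel_gt0.
pose absent := const_state P (ord0 : 'I_M.+2).
pose missed := const_state P (lift ord0 ord0 : 'I_M.+2).
have absent_neq_missed : absent != missed.
  by apply/eqP => /ffunP/(_ (Ordinal P_gt0)); rewrite !ffunE.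
have E_Gamma : {subset [set absent; missed] <= @pos_one_one P M}.
  by move=> z; rewrite !inE => /orP[] /eqP->; apply: const_state_one_one.
have card_E : #|[set absent; missed]| = 2%N by rewrite cards2 absent_neq_missed.
rewrite kpowE -card_E.
apply: (doeblin_bound (kernel_stochastic et_gt0) (@kernel_supported _ _ _ et)
  (target_distribution et_gt0) (@target_supported _ _ _ et) (kernel_stationary et_gt0)
  E_Gamma _ j g' g_ok).
by move=> u z u_ok /E_Gamma z_ok; rewrite -kpowE beta_min.
Qed.
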